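(* Let $M\ge2$, observe $\mathbf y=\mathbf f+\boldsymbol\xi\in\mathbf R^n$ where $\xi_1,\dots,\xi_n$ are i.i.d. centered with variance $\sigma^2$, and for $j=1,\dots,M$ let $\hat{\boldsymbol\mu}_j=A_j\mathbf y+\mathbf b_j$ with deterministic $n\times n$ matrices $A_j$ and deterministic $\mathbf b_j\in\mathbf R^n$. Let $\hat{\boldsymbol\theta}_{\mathrm{pen}}\in\arg\min_{\boldsymbol\theta\in\Lambda^M}H_{\mathrm{pen}}(\boldsymbol\theta)$. Then almost surely \[\|\hat{\boldsymbol\mu}_{\hat{\boldsymbol\theta}_{\mathrm{pen}}}-\mathbf f\|_2^2\le\min_{q=1,\dots,M}\|\hat{\boldsymbol\mu}_q-\mathbf f\|_2^2+\max_{j,k=1,\dots,M}\Big(\Delta_{jk}-\tfrac12\|\hat{\boldsymbol\mu}_j-\hat{\boldsymbol\mu}_k\|_2^2\Big),\] where $\Delta_{jk}=2\boldsymbol\xi^T((A_j-A_k)\mathbf f+\mathbf b_j-\mathbf b_k)+2\big(\boldsymbol\xi^T(A_j-A_k)\boldsymbol\xi-\sigma^2\mathrm{Tr}(A_j-A_k)\big)$. Furthermore, for all $j,k=1,\dots,M$, \[\mathbb E\Big[\tfrac12\|\hat{\boldsymbol\mu}_j-\hat{\boldsymbol\mu}_k\|_2^2\Big]=\tfrac12\|(A_j-A_k)\mathbf f+\mathbf b_j-\mathbf b_k\|_2^2+\tfrac{\sigma^2}{2}\|A_j-A_k\|_F^2.\]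
   Context: $\Lambda^M=\{\boldsymbol\theta\in\mathbf R^M:\sum_j\theta_j=1,\theta_j\ge0\}$. For $\boldsymbol\theta\in\Lambda^M$: $A_{\boldsymbol\theta}=\sum_j\theta_jA_j$, $\mathbf b_{\boldsymbol\theta}=\sum_j\theta_j\mathbf b_j$, $\hat{\boldsymbol\mu}_{\boldsymbol\theta}=A_{\boldsymbol\theta}\mathbf y+\mathbf b_{\boldsymbol\theta}$. $C_p(\boldsymbol\theta)=\|\hat{\boldsymbol\mu}_{\boldsymbol\theta}\|_2^2-2\mathbf y^T\hat{\boldsymbol\mu}_{\boldsymbol\theta}+2\sigma^2\mathrm{Tr}(A_{\boldsymbol\theta})$, $\mathrm{pen}(\boldsymbol\theta)=\sum_j\theta_j\|\hat{\boldsymbol\mu}_{\boldsymbol\theta}-\hat{\boldsymbol\mu}_j\|_2^2$, $H_{\mathrm{pen}}=C_p+\tfrac12\mathrm{pen}$. $\|\cdot\|_F$ is the Frobenius norm. *)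

From HB Require Import structures.
From mathcomp Require Import all_boot all_order all_algebra.
From mathcomp Require Import all_classical all_reals all_analysis.
Set Implicit Arguments. Unset Strict Implicit. Unset Printing Implicit Defensive.
Import Order.TTheory GRing.Theory Num.Theory.
Local Open Scope classical_set_scope.
Local Open Scope ring_scope.

Section Aggregation.
Variables (R : realType) (n M : nat).

Definition sqnorm (v : 'cV[R]_n) : R := \sum_(i < n) v i 0 ^+ 2.

Definition frob2 (A : 'M[R]_n) : R := \sum_(i < n) \sum_(j < n) A i j ^+ 2.

Definition dotv (u v : 'cV[R]_n) : R := \sum_(i < n) u i 0 * v i 0.

Definition simplex (theta : 'I_M -> R) : Prop :=
  (\sum_(j < M) theta j = 1) /\ (forall j, 0 <= theta j).

Variables (A : 'I_M -> 'M[R]_n) (b : 'I_M -> 'cV[R]_n).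

Definition Ath (theta : 'I_M -> R) : 'M[R]_n := \sum_(j < M) theta j *: A j.
Definition bth (theta : 'I_M -> R) : 'cV[R]_n := \sum_(j < M) theta j *: b j.

Definition muhat (y : 'cV[R]_n) (j : 'I_M) : 'cV[R]_n := A j *m y + b j.
Definition muth (y : 'cV[R]_n) (theta : 'I_M -> R) : 'cV[R]_n :=
  Ath theta *m y + bth theta.

Definition Cp (sigma : R) (y : 'cV[R]_n) (theta : 'I_M -> R) : R :=
  sqnorm (muth y theta) - 2 * dotv y (muth y theta)
  + 2 * sigma ^+ 2 * \tr (Ath theta).

Definition pen (y : 'cV[R]_n) (theta : 'I_M -> R) : R :=
  \sum_(j < M) theta j * sqnorm (muth y theta - muhat y j).

Definition Hpen (sigma : R) (y : 'cV[R]_n) (theta : 'I_M -> R) : R :=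
  Cp sigma y theta + pen y theta / 2.

Definition Delta (sigma : R) (f xi : 'cV[R]_n) (j k : 'I_M) : R :=
  2 * dotv xi ((A j - A k) *m f + b j - b k)
  + 2 * (dotv xi ((A j - A k) *m xi) - sigma ^+ 2 * \tr (A j - A k)).

End Aggregation.

Definition mutually_independent d (T : measurableType d) (R : realType)
  (P : probability T R) (n : nat) (X : 'I_n -> T -> R) : Prop :=
  forall B : 'I_n -> set R, (forall i, measurable (B i)) ->
    P (\bigcap_i (X i @^-1` B i)) = (\prod_(i < n) P (X i @^-1` B i))%E.

Definition identically_distributed d (T : measurableType d) (R : realType)
  (P : probability T R) (n : nat) (X : 'I_n -> T -> R) : Prop :=
  forall (i j : 'I_n) (B : set R), measurable B ->
    P (X i @^-1` B) = P (X j @^-1` B).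

From HB Require Import structures.
From mathcomp Require Import all_boot all_order all_algebra.
From mathcomp Require Import all_classical all_reals all_analysis.
From mathcomp Require Import measurable_realfun ring lra.
Import Order.TTheory GRing.Theory Num.Theory.
Local Open Scope classical_set_scope.
Local Open Scope ring_scope.

(** On the simplex, [Hpen] is an affine function of the weights plus half of
    [sqnorm (muth theta)], so along a segment it equals the convex combination of
    its end values minus [t (1 - t) / 2 * sqnorm (muth theta - muth eta)].  Letting
    [t -> 0] at the minimiser gives, for every vertex [e_q],
    [Hpen thetahat + sqnorm (muth thetahat - muhat q) / 2 <= Hpen e_q = Cp e_q].
    Up to a constant, [Cp theta] is the risk [sqnorm (muth theta - f)] minus twice
    the noise correlation [xi^T muth theta - sigma^2 Tr (Ath theta)], which is
    linear in [theta] and whose vertex differences are the [Delta j k].  With the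
    parallel-axis identity
    [pen thetahat + sqnorm (muth thetahat - muhat q) = sum_j thetahat_j sqnorm (muhat j - muhat q)]
    this bounds the risk of [thetahat] by that of any [muhat q] plus a
    [thetahat]-average of [Delta j q - sqnorm (muhat j - muhat q) / 2], hence by
    the maximum.  The expectation identity reduces to [E[xi_l xi_m] = sigma^2 delta_lm];
    the off-diagonal moments vanish by Fubini on the product of the two laws. *)

Section euclidean.
Context {R : realType} {n : nat}.
Implicit Types (u v : 'cV[R]_n) (D : 'M[R]_n).

Lemma dotvC u v : dotv u v = dotv v u.
Proof. by apply: eq_bigr => i _; rewrite mulrC. Qed.

Lemma dotvDl u v w : dotv (u + v) w = dotv u w + dotv v w.
Proof. by rewrite /dotv -big_split; apply: eq_bigr => i _; rewrite mxE mulrDl. Qed.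

Lemma dotvZr (a : R) u v : dotv u (a *: v) = a * dotv u v.
Proof. by rewrite /dotv mulr_sumr; apply: eq_bigr => i _; rewrite mxE mulrCA. Qed.

Lemma dotvZl (a : R) u v : dotv (a *: u) v = a * dotv u v.
Proof. by rewrite dotvC dotvZr dotvC. Qed.

Lemma dotv0r u : dotv u 0 = 0.
Proof. by rewrite /dotv big1 // => i _; rewrite mxE mulr0. Qed.

Lemma dotvDr u v w : dotv u (v + w) = dotv u v + dotv u w.
Proof. by rewrite dotvC dotvDl !(dotvC u). Qed.

Lemma dotv_sumr {I : finType} u (c : I -> R) (z : I -> 'cV[R]_n) :
  dotv u (\sum_j c j *: z j) = \sum_j c j * dotv u (z j).
Proof.
elim/big_ind2: _ => [|x1 x2 y1 y2 <- <-|j _]; last by rewrite dotvZr.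
  exact: dotv0r.
by rewrite dotvDr.
Qed.

Lemma dotv_mulmx u D v : dotv u (D *m v) = dotv (D^T *m u) v.
Proof.
rewrite /dotv; under eq_bigr do rewrite mxE big_distrr.
rewrite exchange_big; apply: eq_bigr => j _; rewrite !mxE big_distrl.
by apply: eq_bigr => i _; rewrite !mxE /= mulrA [u i 0 * _]mulrC.
Qed.

Lemma sqnorm_dotv u : sqnorm u = dotv u u.
Proof. by apply: eq_bigr => i _; rewrite expr2. Qed.

Lemma sqnormD u v : sqnorm (u + v) = sqnorm u + 2 * dotv u v + sqnorm v.
Proof. by rewrite !sqnorm_dotv dotvDl !dotvDr (dotvC v u); ring. Qed.

Lemma sqnormB u v : sqnorm (u - v) = sqnorm u - 2 * dotv u v + sqnorm v.
Proof.
have dotvNr w z : dotv w (- z) = - dotv w z.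
  by rewrite /dotv -sumrN; apply: eq_bigr => i _; rewrite mxE mulrN.
by rewrite sqnormD !sqnorm_dotv !dotvNr (dotvC (- v)) dotvNr opprK mulrN.
Qed.

Lemma sqnorm0 : sqnorm (0 : 'cV[R]_n) = 0.
Proof. by rewrite /sqnorm big1 // => i _; rewrite mxE expr0n. Qed.

Lemma sqnorm_convex (t : R) u v :
  sqnorm ((1 - t) *: u + t *: v)
    = (1 - t) * sqnorm u + t * sqnorm v - t * (1 - t) * sqnorm (u - v).
Proof. by rewrite sqnormB sqnormD !sqnorm_dotv !dotvZl !dotvZr; ring. Qed.

Lemma sum_sqnorm_sub {I : finType} (c : I -> R) (z : I -> 'cV[R]_n) v :
  \sum_j c j = 1 ->
  \sum_j c j * sqnorm (z j - v)
    = sqnorm (\sum_j c j *: z j - v)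
      + \sum_j c j * sqnorm (\sum_i c i *: z i - z j).
Proof.
move=> c1; set zb := \sum_j c j *: z j.
have centered : \sum_j c j * dotv (zb - v) (zb - z j) = 0.
  rewrite -dotv_sumr (eq_bigr _ (fun j _ => scalerBr _ _ _)) sumrB.
  by rewrite -scaler_suml c1 scale1r subrr dotv0r.
have split_j j : sqnorm (z j - v)
    = sqnorm (zb - v) - 2 * dotv (zb - v) (zb - z j) + sqnorm (zb - z j).
  by rewrite -sqnormB; congr sqnorm; rewrite opprB [in RHS]addrC addrA subrK.
under eq_bigr do rewrite split_j !mulrDr mulrN mulrCA.
by rewrite big_split sumrB /= -!mulr_sumr centered -mulr_suml c1; ring.
Qed.

Lemma sqnorm_affine u D (v : 'I_n -> R) :
  sqnorm (u + D *m \col_i v i) / 2 = sqnorm u / 2 + \sum_l (D^T *m u) l 0 * v l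
    + \sum_l \sum_m (D^T *m D) l m / 2 * (v l * v m).
Proof.
have colE l : (\col_i v i) l 0 = v l by rewrite mxE.
rewrite sqnormD dotv_mulmx [sqnorm (D *m _)]sqnorm_dotv dotv_mulmx mulmxA.
have -> : dotv (D^T *m D *m \col_i v i) (\col_i v i)
    = \sum_l \sum_m (D^T *m D) l m * (v l * v m).
  apply: eq_bigr => l _; rewrite colE mxE big_distrl.
  by apply: eq_bigr => m _ /=; rewrite colE; ring.
have -> : \sum_l \sum_m (D^T *m D) l m / 2 * (v l * v m)
    = (\sum_l \sum_m (D^T *m D) l m * (v l * v m)) / 2.
  rewrite mulr_suml; apply: eq_bigr => l _; rewrite mulr_suml.
  by apply: eq_bigr => m _; rewrite mulrAC.
by rewrite /dotv; under eq_bigr do rewrite colE; field.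
Qed.

Lemma frob2_tr D : frob2 D = \tr (D^T *m D).
Proof.
rewrite /frob2 /mxtrace exchange_big; apply: eq_bigr => l _.
by rewrite mxE; apply: eq_bigr => i _; rewrite !mxE expr2.
Qed.

End euclidean.

Lemma ler_add_vanishing {R : realFieldType} (x y z : R) :
  (forall t, 0 < t -> t <= 1 -> x <= y + t * z) -> x <= y.
Proof.
move=> le_xyz; rewrite leNgt; apply/negP => lt_yx.
pose t := Num.min 1 ((x - y) / (`|z| + 1)).
have z1_gt0 : 0 < `|z| + 1 by rewrite ltr_pwDr.
have t_gt0 : 0 < t by rewrite lt_min ltr01 divr_gt0 // subr_gt0.
have t_le1 : t <= 1 by rewrite ge_min lexx.
have tz_lt : t * (`|z| + 1) <= x - y by rewrite -ler_pdivlMr // ge_min lexx orbT.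
have := le_xyz t t_gt0 t_le1.
have : t * z <= t * `|z| by rewrite ler_pM2l // ler_norm.
nra.
Qed.

Definition vertex {R : pzSemiRingType} {M : nat} (q : 'I_M) : 'I_M -> R :=
  fun j => (j == q)%:R.

Section aggregation.
Context {R : realType} {n M : nat}.
Variables (A : 'I_M -> 'M[R]_n) (b : 'I_M -> 'cV[R]_n).
Implicit Types (theta eta : 'I_M -> R) (y : 'cV[R]_n).

Definition mix theta eta (t : R) : 'I_M -> R :=
  fun j => (1 - t) * theta j + t * eta j.

Lemma sum_vertexM q (F : 'I_M -> R) : \sum_j vertex q j * F j = F q.
Proof.
rewrite (bigD1 q) //= /vertex eqxx mul1r big1 ?addr0 // => j /negbTE ->.
by rewrite mul0r.
Qed.

Lemma sum_vertexZ q (F : 'I_M -> 'cV[R]_n) : \sum_j vertex q j *: F j = F q.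
Proof.
rewrite (bigD1 q) //= /vertex eqxx scale1r big1 ?addr0 // => j /negbTE ->.
by rewrite scale0r.
Qed.

Lemma simplex_vertex q : simplex (vertex q : 'I_M -> R).
Proof.
split=> [|j]; last by rewrite /vertex ler0n.
by under eq_bigr do rewrite -[vertex q _]mulr1; rewrite sum_vertexM.
Qed.

Lemma simplex_mix {theta eta t} : simplex theta -> simplex eta ->
  0 <= t <= 1 -> simplex (mix theta eta t).
Proof.
move=> [th1 th0] [et1 et0] /andP[t0 t1]; split=> [|j].
  by rewrite big_split /= -!mulr_sumr th1 et1; ring.
by rewrite addr_ge0 // mulr_ge0 // subr_ge0.
Qed.

Lemma muth_sum y theta : muth A b y theta = \sum_j theta j *: muhat A b y j.
Proof.
rewrite /muth /Ath /bth mulmx_suml -big_split; apply: eq_bigr => j _.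
by rewrite /muhat scalerDr scalemxAl.
Qed.

Lemma tr_Ath theta : \tr (Ath A theta) = \sum_j theta j * \tr (A j).
Proof. by rewrite /Ath raddf_sum; apply: eq_bigr => j _; exact: mxtraceZ. Qed.

Lemma muth_vertex y q : muth A b y (vertex q) = muhat A b y q.
Proof. by rewrite muth_sum sum_vertexZ. Qed.

Lemma muth_mix y theta eta t :
  muth A b y (mix theta eta t) = (1 - t) *: muth A b y theta + t *: muth A b y eta.
Proof.
rewrite !muth_sum !scaler_sumr -big_split /=; apply: eq_bigr => j _.
by rewrite !scalerA -scalerDl.
Qed.

Lemma pen_sqnorm y theta : \sum_j theta j = 1 ->
  pen A b y theta = \sum_j theta j * sqnorm (muhat A b y j) - sqnorm (muth A b y theta).
Proof.
move=> th1; rewrite /pen; have := sum_sqnorm_sub theta (muhat A b y) 0 th1.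
by rewrite -muth_sum; under eq_bigr do rewrite subr0; rewrite subr0 => ->; ring.
Qed.

Lemma pen_vertex y q : pen A b y (vertex q) = 0.
Proof. by rewrite /pen sum_vertexM muth_vertex subrr sqnorm0. Qed.

Lemma HpenE sigma y theta : \sum_j theta j = 1 ->
  Hpen A b sigma y theta = sqnorm (muth A b y theta) / 2
    - 2 * dotv y (muth A b y theta) + 2 * sigma ^+ 2 * \tr (Ath A theta)
    + (\sum_j theta j * sqnorm (muhat A b y j)) / 2.
Proof. by move=> th1; rewrite /Hpen /Cp pen_sqnorm //; field. Qed.

Lemma Hpen_mix sigma y theta eta t : \sum_j theta j = 1 -> \sum_j eta j = 1 ->
  Hpen A b sigma y (mix theta eta t)
    = (1 - t) * Hpen A b sigma y theta + t * Hpen A b sigma y eta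
      - t * (1 - t) / 2 * sqnorm (muth A b y theta - muth A b y eta).
Proof.
move=> th1 et1; have mix1 : \sum_j mix theta eta t j = 1.
  by rewrite big_split /= -!mulr_sumr th1 et1; ring.
rewrite !HpenE // muth_mix sqnorm_convex dotvDr !dotvZr !tr_Ath.
rewrite /mix; under eq_bigr do rewrite mulrDl -!mulrA.
under [X in _ + X / 2]eq_bigr do rewrite mulrDl -!mulrA.
rewrite !big_split /= -!mulr_sumr; ring.
Qed.

Lemma Hpen_argmin_gap sigma y theta eta : simplex theta ->
  (forall zeta, simplex zeta -> Hpen A b sigma y theta <= Hpen A b sigma y zeta) ->
  simplex eta ->
  Hpen A b sigma y theta + sqnorm (muth A b y theta - muth A b y eta) / 2
    <= Hpen A b sigma y eta.
Proof.
move=> th_simplex th_min et_simplex.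
apply: (@ler_add_vanishing _ _ _ (sqnorm (muth A b y theta - muth A b y eta) / 2)).
move=> t t0 t1; have t01 : 0 <= t <= 1 by rewrite (ltW t0) t1.
have := th_min _ (simplex_mix th_simplex et_simplex t01).
rewrite Hpen_mix ?th_simplex.1 ?et_simplex.1 // => le_mix.
rewrite -(ler_pM2l t0); nra.
Qed.

End aggregation.

Section oracle.
Context {R : realType} {n M : nat}.
Variables (A : 'I_M -> 'M[R]_n) (b : 'I_M -> 'cV[R]_n).
Variables (sigma : R) (f xi : 'cV[R]_n).
Local Notation y := (f + xi).
Local Notation mu := (muhat A b y).

Definition noise_corr (theta : 'I_M -> R) : R :=
  dotv xi (muth A b y theta) - sigma ^+ 2 * \tr (Ath A theta).

Lemma muhat_sub j k :
  mu j - mu k = ((A j - A k) *m f + b j - b k) + (A j - A k) *m xi.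
Proof.
rewrite /muhat !mulmxBl !mulmxDr.
by apply/matrixP => i l; rewrite !mxE; ring.
Qed.

Lemma noise_corr_sum theta :
  noise_corr theta = \sum_j theta j * noise_corr (vertex j).
Proof.
rewrite /noise_corr muth_sum dotv_sumr tr_Ath mulr_sumr -sumrB.
by apply: eq_bigr => j _; rewrite muth_vertex tr_Ath sum_vertexM; ring.
Qed.

Lemma DeltaE j k :
  Delta A b sigma f xi j k = 2 * noise_corr (vertex j) - 2 * noise_corr (vertex k).
Proof.
rewrite /noise_corr !muth_vertex !tr_Ath !sum_vertexM.
rewrite -(subrK (mu k) (mu j)) dotvDr muhat_sub dotvDr /Delta raddfB /=; ring.
Qed.

Lemma Cp_risk theta : Cp A b sigma y theta
  = sqnorm (muth A b y theta - f) - sqnorm f - 2 * noise_corr theta.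
Proof. by rewrite /Cp /noise_corr sqnormB dotvDl (dotvC f); ring. Qed.

Lemma oracle_bound theta q : simplex theta ->
  (forall zeta, simplex zeta -> Hpen A b sigma y theta <= Hpen A b sigma y zeta) ->
  sqnorm (muth A b y theta - f)
    <= sqnorm (mu q - f) + \sum_j theta j * (Delta A b sigma f xi j q - sqnorm (mu j - mu q) / 2).
Proof.
move=> th_simplex th_min; have th1 := th_simplex.1.
have gap := Hpen_argmin_gap A b sigma y theta (vertex q) th_simplex th_min (simplex_vertex q).
rewrite /Hpen pen_vertex muth_vertex in gap.
have := sum_sqnorm_sub theta mu (mu q) th1.
rewrite -muth_sum -/(pen A b y theta) => parallel.
have -> : \sum_j theta j * (Delta A b sigma f xi j q - sqnorm (mu j - mu q) / 2)
    = 2 * noise_corr theta - 2 * noise_corr (vertex q) * \sum_j theta j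
      - (\sum_j theta j * sqnorm (mu j - mu q)) / 2.
  rewrite noise_corr_sum !mulr_sumr mulr_suml -!sumrB.
  by apply: eq_bigr => j _; rewrite DeltaE; ring.
move: gap; rewrite !Cp_risk muth_vertex th1; lra.
Qed.

End oracle.

Lemma le_bigmin_add_bigmax {R : realType} {M : nat} (x : R) (a : 'I_M -> R)
    (B : 'I_M -> 'I_M -> R) (theta : 'I_M -> R) :
  (0 < M)%N -> simplex theta -> (forall q, x <= a q + \sum_j theta j * B j q) ->
  (x%:E <= \big[Order.min/+oo]_(q < M) (a q)%:E
           + \big[Order.max/-oo]_(j < M) \big[Order.max/-oo]_(k < M) (B j k)%:E)%E.
Proof.
move=> M_gt0 [th1 th0] le_x.
pose q0 := [arg min_(q < Ordinal M_gt0) a q]%O.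
pose j0 := [arg max_(j > Ordinal M_gt0) B j q0]%O.
have min_q0 q : a q0 <= a q by rewrite /q0; case: arg_minP => // i _; exact.
have max_j0 j : B j q0 <= B j0 q0 by rewrite /j0; case: arg_maxP => // i _; exact.
have : x <= a q0 + B j0 q0.
  apply: (le_trans (le_x q0)); rewrite lerD2l -[B j0 q0]mul1r -th1 mulr_suml.
  by apply: ler_sum => j _; exact: ler_wpM2l.
rewrite -lee_fin EFinD => /le_trans; apply; apply: leeD.
  by apply/bigmin_geP; split => [|q _]; rewrite ?leey // lee_fin.
by apply: (bigmax_sup j0) => //; apply: (bigmax_sup q0).
Qed.

Section pair_rv.
Context d (T : measurableType d) (R : realType) (X Y : {mfun T >-> R}).

Definition pair_rv (w : T) : R * R := (X w, Y w).

Lemma measurable_pair_rv : measurable_fun setT pair_rv.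
Proof. exact: measurable_fun_pair. Qed.

HB.instance Definition _ :=
  isMeasurableFun.Build _ _ _ _ pair_rv measurable_pair_rv.
End pair_rv.
Arguments pair_rv {d T R}.

Section independent_product.
Local Open Scope ereal_scope.
Context d (T : measurableType d) (R : realType) (P : probability T R).

Lemma expectation_mul_indep (X Y : {RV P >-> R}) :
  (forall A B, measurable A -> measurable B ->
     P (X @^-1` A `&` Y @^-1` B) = P (X @^-1` A) * P (Y @^-1` B)) ->
  (X : T -> R) \in Lfun P 2%:E -> (Y : T -> R) \in Lfun P 2%:E ->
  'E_P[X \* Y] = 'E_P[X] * 'E_P[Y].
Proof.
move=> indXY LX LY.
have L1 (Z : T -> R) : Z \in Lfun P 2%:E -> Z \in Lfun P 1.
  by move=> LZ; apply: Lfun_subset12 => //; rewrite fin_num_measure.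
pose mX := distribution P X; pose mY := distribution P Y.
pose XY : {RV P >-> (R * R)%type} := pair_rv X Y.
have law_XY S : measurable S -> (mX \x mY) S = distribution P XY S.
  by apply: product_measure_unique => A B mA mB; rewrite /= /pushforward -indXY.
pose g (z : R * R) := (z.1 * z.2)%:E.
have mg : measurable_fun [set: (R * R)%type] (g : (R * R)%type -> \bar R).
  by apply/measurable_EFinP; apply: measurable_funM; [exact: measurable_fst|exact: measurable_snd].
have ig : P.-integrable setT (g \o XY).
  by apply/Lfun1_integrable; exact: Lfun2_mul_Lfun1.
have ig_prod : (mX \x mY).-integrable setT g.
  apply/integrableP; split => //.
  rewrite (eq_measure_integral (distribution P XY)); last by move=> *; exact: law_XY.
  have : (distribution P XY).-integrable setT g by exact: integrable_pushforward.
  by case/integrableP.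
have law_integrable (Z : {RV P >-> R}) : (Z : T -> R) \in Lfun P 2%:E ->
    (distribution P Z).-integrable setT EFin.
  by move=> LZ; apply: integrable_pushforward => //; apply/Lfun1_integrable; exact: L1.
have law_mean (Z : {RV P >-> R}) : (Z : T -> R) \in Lfun P 2%:E ->
    \int[distribution P Z]_z z%:E = 'E_P[Z].
  by move=> LZ; rewrite expectation_def integral_distribution //; apply/Lfun1_integrable; exact: L1.
have -> : 'E_P[X \* Y] = \int[P]_w (g \o XY) w by rewrite expectation_def.
rewrite -integral_distribution // (eq_measure_integral (mX \x mY)); last first.
  by move=> A mA _; exact/esym/law_XY.
rewrite -integral12_prod_meas1 ?law_integrable // /fubini_F /g /=.
under eq_integral do under eq_integral do rewrite EFinM.
under eq_integral do rewrite integralZl ?law_integrable // law_mean //.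
rewrite -(fineK (expectation_fin_num (L1 _ LY))) integralZr ?law_integrable //.
by rewrite law_mean.
Qed.

End independent_product.

Lemma mutually_independent_pair d (T : measurableType d) (R : realType)
    (P : probability T R) n (X : 'I_n -> T -> R) (l m : 'I_n) :
  mutually_independent P X -> l != m ->
  forall A B, measurable A -> measurable B ->
    P (X l @^-1` A `&` X m @^-1` B) = (P (X l @^-1` A) * P (X m @^-1` B))%E.
Proof.
move=> indX lm A B mA mB.
have ml : m != l by rewrite eq_sym.
pose C i := if i == l then A else if i == m then B else setT.
have mC i : measurable (C i) by rewrite /C; case: ifP => // _; case: ifP.
have -> : X l @^-1` A `&` X m @^-1` B = \bigcap_i (X i @^-1` C i).
  apply/seteqP; split => [w [XlA XmB] i _|w XC]; last first.
    by split; [have := XC l I | have := XC m I]; rewrite /C ?(negbTE ml) eqxx.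
  by rewrite /C; case: ifP => [/eqP -> //|_]; case: ifP => [/eqP -> //|_].
rewrite indX // (bigD1 l) //= (bigD1 m) //= /C (negbTE ml) !eqxx.
rewrite big1 ?mule1 // => i /andP[/negbTE -> /negbTE ->].
by rewrite preimage_setT probability_setT.
Qed.

Section moments.
Local Open Scope ereal_scope.
Context d (T : measurableType d) (R : realType) (P : probability T R).

Lemma expectation_sum_ord k (F : 'I_k -> T -> R) :
  (forall i, F i \in Lfun P 1) ->
  'E_P[fun w => (\sum_(i < k) F i w)%R] = \sum_(i < k) 'E_P[F i].
Proof.
move=> LF; rewrite -fct_sumE -(big_map F xpredT id) expectation_sum ?big_map //.
by move=> _ /mapP[i _ ->].
Qed.

Lemma expectation_scale (c : R) (X : T -> R) : X \in Lfun P 1 ->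
  'E_P[fun w => (c * X w)%R] = c%:E * 'E_P[X].
Proof.
move=> LX; rewrite -expectationZl //; congr 'E_P[_].
by apply/funext => w /=; rewrite mulrC.
Qed.

Lemma Lfun1_scale (c : R) (X : T -> R) : X \in Lfun P 1 ->
  (fun w => (c * X w)%R) \in Lfun P 1.
Proof. exact: rpredZ. Qed.

Lemma Lfun1_sum_ord k (F : 'I_k -> T -> R) : (forall i, F i \in Lfun P 1) ->
  (fun w => (\sum_(i < k) F i w)%R) \in Lfun P 1.
Proof. by move=> LF; rewrite -fct_sumE rpred_sum. Qed.

Variables (n : nat) (x : 'I_n -> T -> R) (sigma : R).
Hypothesis Lx : forall l, x l \in Lfun P 1.
Hypothesis Lxx : forall l m, (x l \* x m)%R \in Lfun P 1.
Hypothesis Ex : forall l, 'E_P[x l] = 0.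
Hypothesis Exx :
  forall l m, 'E_P[(x l \* x m)%R] = (if l == m then sigma ^+ 2 else 0)%R%:E.

Lemma expectation_linear_form (a : 'I_n -> R) :
  'E_P[fun w => (\sum_l a l * x l w)%R] = 0.
Proof.
rewrite expectation_sum_ord => [|l]; last exact: Lfun1_scale.
by rewrite big1 // => l _; rewrite expectation_scale // Ex mule0.
Qed.

Lemma expectation_quadratic_form (B : 'I_n -> 'I_n -> R) :
  'E_P[fun w => (\sum_l \sum_m B l m * (x l w * x m w))%R]
    = (sigma ^+ 2 * \sum_l B l l)%R%:E.
Proof.
rewrite expectation_sum_ord => [|l]; last first.
  by apply: Lfun1_sum_ord => m; have := Lfun1_scale (B l m) _ (Lxx l m).
rewrite mulr_sumr -sumEFin; apply: eq_bigr => l _.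
rewrite expectation_sum_ord => [|m]; last by have := Lfun1_scale (B l m) _ (Lxx l m).
rewrite (bigD1 l) //= big1 => [|m /negbTE ml].
  by rewrite (expectation_scale _ _ (Lxx l l)) Exx eqxx -EFinM mulrC adde0.
by rewrite (expectation_scale _ _ (Lxx l m)) Exx eq_sym ml mule0.
Qed.

Lemma expectation_sqnorm_affine (u : 'cV[R]_n) (D : 'M[R]_n) :
  'E_P[fun w => (sqnorm (u + D *m \col_i x i w) / 2)%R]
    = (sqnorm u / 2 + sigma ^+ 2 / 2 * frob2 D)%R%:E.
Proof.
pose B l m := ((D^T *m D) l m / 2)%R.
pose lin w := (\sum_l (D^T *m u) l 0 * x l w)%R.
pose quad w := (\sum_l \sum_m B l m * (x l w * x m w))%R.
have Llin : lin \in Lfun P 1.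
  by apply: Lfun1_sum_ord => l; exact: Lfun1_scale.
have Lquad : quad \in Lfun P 1.
  apply: Lfun1_sum_ord => l; apply: Lfun1_sum_ord => m.
  by have := Lfun1_scale (B l m) _ (Lxx l m).
have -> : (fun w => sqnorm (u + D *m \col_i x i w) / 2)%R
    = ((cst (sqnorm u / 2) \+ lin) \+ quad)%R.
  by apply/funext => w; rewrite /= sqnorm_affine.
rewrite (expectationD (X := (cst _ \+ lin)%R) (Y := quad)) ?rpredD ?Lfun_cst //.
rewrite expectationD ?Lfun_cst //.
rewrite expectation_cst expectation_linear_form expectation_quadratic_form.
rewrite adde0 -EFinD frob2_tr /mxtrace /B -mulr_suml.
by congr EFin; ring.
Qed.

End moments.

Lemma noise_second_moment d (T : measurableType d) (R : realType) (P : probability T R)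
    n (X : 'I_n -> {RV P >-> R}) (sigma : R) :
  mutually_independent P (fun i => (X i : T -> R)) ->
  (forall i, (X i : T -> R) \in Lfun P 2%:E) ->
  (forall i, 'E_P[X i] = 0)%E ->
  (forall i, 'V_P[X i] = (sigma ^+ 2)%:E)%E ->
  forall l m, ('E_P[X l \* X m] = (if l == m then sigma ^+ 2 else 0)%:E)%E.
Proof.
move=> indX L2 E0 V l m; case: eqVneq => [<-|lm].
  by have := varianceE (L2 l); rewrite V E0 expe2 mul0e sube0.
rewrite expectation_mul_indep ?E0 ?mul0e //.
exact: mutually_independent_pair indX lm.
Qed.

Theorem proposition3p3 (R : realType) (d : measure_display)
  (T : measurableType d) (P : probability T R) (n M : nat)
  (sigma : R) (f : 'cV[R]_n) (xi : 'I_n -> {RV P >-> R})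
  (A : 'I_M -> 'M[R]_n) (b : 'I_M -> 'cV[R]_n)
  (thetahat : T -> 'I_M -> R) :
  (2 <= M)%N ->
  mutually_independent P (fun i => (xi i : T -> R)) ->
  identically_distributed P (fun i => (xi i : T -> R)) ->
  (forall i, (xi i : T -> R) \in Lfun P 2%:E) ->
  (forall i, ('E_P[xi i] = 0)%E) ->
  (forall i, ('V_P[xi i] = (sigma ^+ 2)%:E)%E) ->
  (forall w, let y := f + \col_i xi i w in
     simplex (thetahat w) /\
     forall theta, simplex theta ->
       Hpen A b sigma y (thetahat w) <= Hpen A b sigma y theta) ->
  (* almost-sure oracle inequality *)
  ({ae P, forall w,
     let xiw := \col_i xi i w in
     let y := f + xiw in
     ((sqnorm (muth A b y (thetahat w) - f))%:E <=
        \big[Order.min/+oo%E]_(q < M) (sqnorm (muhat A b y q - f))%:E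
      + \big[Order.max/-oo%E]_(j < M) \big[Order.max/-oo%E]_(k < M)
          (Delta A b sigma f xiw j k - sqnorm (muhat A b y j - muhat A b y k) / 2)%:E)%E})
  /\
  (* expectation identity *)
  (forall j k : 'I_M,
     ('E_P[fun w => (sqnorm (muhat A b (f + \col_i xi i w) j
                         - muhat A b (f + \col_i xi i w) k) / 2)%R]
     = (sqnorm ((A j - A k) *m f + b j - b k) / 2
        + sigma ^+ 2 / 2 * frob2 (A j - A k))%R%:E)%E).
Proof.
move=> M_ge2 indep _ L2 E0 V Hmin; split.
  apply: aeW => w /=; have [th_simplex th_min] := Hmin w.
  apply: (le_bigmin_add_bigmax _ _ _ _ _ th_simplex) => [|q].
    exact: leq_trans M_ge2.
  exact: oracle_bound.
move=> j k; under eq_fun do rewrite muhat_sub.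
apply: (@expectation_sqnorm_affine _ _ _ P n (fun i => (xi i : T -> R)) sigma) => [l|l m|//|].
- by apply: Lfun_subset12; rewrite ?fin_num_measure.
- exact: Lfun2_mul_Lfun1.
- exact: noise_second_moment.
Qed.
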